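(* Let $\mathcal P$ be a countable set and consider a discrete-time Markov process $\{Z_t\}_{t\ge0}=\{(x_t,y_t)\}_{t\ge0}$ on $\mathbb R^d_+\times\mathcal P$ defined as follows: for each $i\in\mathcal P$ there is a measurable map $f(\cdot,i):\mathbb R^d_+\to\mathbb R^d_+$; there is a measurable map $P:\mathbb R^d_+\times\mathcal P\times\mathcal P\to[0,1]$ such that for each $(x,y)$, $P_x(y,\cdot):=P(x,y,\cdot)$ is a probability on $\mathcal P$; given $(x_n,y_n)=(x,y)$, first $y_{n+1}$ is drawn according to $P_x(y,\cdot)$ and then $x_{n+1}=f(x,y_{n+1})$; the initial state $(x_0,y_0)\in\mathbb R^d_+\times\mathcal P$ is given. Assume there is a constant $L>0$ with $\|x-f(x,i)\|\le L$ for all $(x,i)\in\mathbb R^d_+\times\mathcal P$. Suppose further that there exist a bounded measurable set $C\subset\mathbb R^d_+$ and a constant $a>0$ such that $$\sum_{y'\in\mathcal P}P_x(y,y')f(x,y')-x\le -a\frac{x}{\|x\|}\quad\text{for all }(x,y)\in(\mathbb R^d_+\setminus C)\times\mathcal P.$$ Then for every $r>0$, $\sup_{t\ge0}\mathbb E[\|x_t\|^r]<\infty$.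
   Context: $\mathbb R^d_+=\{x\in\mathbb R^d:x_i\ge0\ \forall i\}$, $\|\cdot\|$ is the Euclidean norm, and vector inequalities are component-wise. *)

From HB Require Import structures.
From mathcomp Require Import all_boot all_order all_algebra.
From mathcomp Require Import all_classical all_reals all_analysis.
Set Implicit Arguments. Unset Strict Implicit. Unset Printing Implicit Defensive.
Import Order.TTheory GRing.Theory Num.Theory.
Local Open Scope classical_set_scope.
Local Open Scope ring_scope.

Definition enorm (R : realType) (d : nat) (x : 'rV[R]_d) : R :=
  Num.sqrt (\sum_(j < d) x ord0 j ^+ 2).

Definition nonneg_vec (R : realType) (d : nat) (x : 'rV[R]_d) : Prop :=
  forall j : 'I_d, 0 <= x ord0 j.

(* Expectation of g(Z_t) for the Markov chain Z_t = (x_t, y_t) started at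
   Z_0 = (x, y), where y_{n+1} ~ P x_n y_n . and x_{n+1} = f x_n y_{n+1}.
   By the Markov property (one-step analysis)
     E_{(x,y)}[g(Z_0)]     = g(x,y),
     E_{(x,y)}[g(Z_{t+1})] = sum_{y'} P x y y' * E_{(f x y', y')}[g(Z_t)].
   g is nonnegative, extended-real valued; the countable sums are
   sums of nonnegative terms (esum). *)
Fixpoint chain_exp (R : realType) (d : nat) (Pc : choiceType)
    (f : 'rV[R]_d -> Pc -> 'rV[R]_d) (P : 'rV[R]_d -> Pc -> Pc -> R)
    (t : nat) (g : 'rV[R]_d -> Pc -> \bar R) (x : 'rV[R]_d) (y : Pc)
    : \bar R :=
  match t with
  | 0 => g x y
  | t'.+1 => (\esum_(y' in [set: Pc])
               ((P x y y')%:E * chain_exp f P t' g (f x y') y'))%E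
  end.

From HB Require Import structures.
From mathcomp Require Import all_boot all_order all_algebra.
From mathcomp Require Import all_classical all_reals all_analysis.
From mathcomp Require Import ring lra.
Import Order.TTheory GRing.Theory Num.Theory.
Set Implicit Arguments. Unset Strict Implicit.
Local Open Scope classical_set_scope.
Local Open Scope ring_scope.

(* The Lyapunov function V x = exp (th |x|) has a geometric drift for small th:
   E[V x_1 | x_0 = x] <= (1 - th a / 4) V x + K.  Far from the origin, write
   exp (th |z|) = exp (th |x|) exp (th (|z| - |x|)) and expand the second factor
   to order two (|z| - |x| <= L); since |x| |z| <= <x, z> + L^2 / 2 whenever
   |x - z| <= L, the expected first-order term is at most th (-a + L^2 / (2|x|)),
   which the componentwise drift condition makes negative once |x| >= L^2 / a.
   Near the origin the jumps are bounded, so V x_1 is bounded.  Iterating the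
   drift bounds E[V x_t] uniformly in t, and |x|^r <= (r / th)^r V x. *)
Section CauchySchwarz.
Variables (R : realFieldType) (I : finType).
Implicit Types u v : I -> R.

Lemma sqr_sum_mul_le u v :
  (\sum_i u i * v i) ^+ 2 <= (\sum_i u i ^+ 2) * (\sum_i v i ^+ 2).
Proof.
set A := \sum_i u i ^+ 2; set B := \sum_i u i * v i; set C := \sum_i v i ^+ 2.
have quad_ge0 t : 0 <= t ^+ 2 * A + 2 * t * B + C.
  have -> : t ^+ 2 * A + 2 * t * B + C = \sum_i (t * u i + v i) ^+ 2.
    rewrite /A /B /C !mulr_sumr -!big_split /=.
    by apply: eq_bigr => i _; ring.
  by apply: sumr_ge0 => i _; exact: sqr_ge0.
have [A_gt0|A_le0] := ltrP 0 A.
  have := quad_ge0 (- B / A).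
  have -> : (- B / A) ^+ 2 * A + 2 * (- B / A) * B + C = C - B ^+ 2 / A.
    by field; rewrite gt_eqF.
  by rewrite subr_ge0 ler_pdivrMr // mulrC.
(* when A = 0 the quadratic is affine in t, so it stays nonnegative only if B = 0 *)
have A0 : A = 0 by apply/eqP; rewrite eq_le A_le0 sumr_ge0 // => i _; exact: sqr_ge0.
have [->|B_neq0] := eqVneq B 0; first by rewrite expr0n A0 mul0r.
have := quad_ge0 (- (C + 1) / (2 * B)).
have -> : (- (C + 1) / (2 * B)) ^+ 2 * A + 2 * (- (C + 1) / (2 * B)) * B + C = - 1.
  by rewrite A0; field.
by rewrite oppr_ge0 ler10.
Qed.

End CauchySchwarz.

Section EuclideanNorm.
Variables (R : realType) (d : nat).
Implicit Types x y : 'rV[R]_d.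

Definition vdot x y := \sum_(j < d) x ord0 j * y ord0 j.

Lemma enorm_ge0 x : 0 <= enorm x.
Proof. exact: sqrtr_ge0. Qed.

Lemma enorm_sqr x : enorm x ^+ 2 = \sum_(j < d) x ord0 j ^+ 2.
Proof. by rewrite sqr_sqrtr // sumr_ge0 // => j _; exact: sqr_ge0. Qed.

Lemma enorm_sqrB x y :
  enorm (x - y) ^+ 2 = enorm x ^+ 2 - 2 * vdot x y + enorm y ^+ 2.
Proof.
rewrite !enorm_sqr /vdot mulr_sumr -sumrB -big_split /=.
by apply: eq_bigr => j _; rewrite !mxE; ring.
Qed.

Lemma vdot_le_enorm x y : vdot x y <= enorm x * enorm y.
Proof.
have [xy_le0|xy_gt0] := lerP (vdot x y) 0.
  by rewrite (le_trans xy_le0) ?mulr_ge0 ?enorm_ge0.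
rewrite -(@ler_pXn2r _ 2) // ?nnegrE ?mulr_ge0 ?enorm_ge0 ?(ltW xy_gt0) //.
by rewrite exprMn !enorm_sqr; exact: (sqr_sum_mul_le (x ord0) (y ord0)).
Qed.

Lemma enorm_dist x y : `|enorm x - enorm y| <= enorm (x - y).
Proof.
rewrite -(@ler_pXn2r _ 2) // ?nnegrE ?enorm_ge0 // real_normK ?num_real //.
by rewrite enorm_sqrB; have := vdot_le_enorm x y; nra.
Qed.

Lemma enorm_mul_le_vdot x y :
  enorm x * enorm y <= vdot x y + enorm (x - y) ^+ 2 / 2.
Proof. by rewrite enorm_sqrB; have := sqr_ge0 (enorm x - enorm y); nra. Qed.

Lemma vdot_nonneg_ge0 x y : nonneg_vec x -> nonneg_vec y -> 0 <= vdot x y.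
Proof. by move=> x_ge0 y_ge0; apply: sumr_ge0 => j _; rewrite mulr_ge0. Qed.

End EuclideanNorm.

Section ExpBounds.
Variable R : realType.

Lemma expR_le_quad (u : R) : u <= 1 / 2 -> expR u <= 1 + u + 2 * u ^+ 2.
Proof.
move=> u_le.
have u1_gt0 : 0 < 1 - u by lra.
have expR_mul_le1 : expR u * (1 - u) <= 1.
  have := ler_wpM2l (ltW (expR_gt0 u)) (expR_ge1Dx (- u)).
  by rewrite -expRD addrN expR0.
have quad_ge : 1 <= (1 - u) * (1 + u + 2 * u ^+ 2).
  have : 0 <= u ^+ 2 * (1 - 2 * u) by rewrite mulr_ge0 ?sqr_ge0 //; lra.
  have -> : (1 - u) * (1 + u + 2 * u ^+ 2) = 1 + u ^+ 2 * (1 - 2 * u) by ring.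
  lra.
by rewrite -(ler_pM2r u1_gt0); lra.
Qed.

Lemma powR_le_expR (u r : R) : 0 <= r -> 0 <= u -> u `^ r <= expR (r * u).
Proof.
move=> r_ge0 u_ge0; have [->|u_neq0] := eqVneq u 0.
  by rewrite mulr0 expR0 /powR eqxx; case: (r == 0); rewrite ?ler01 ?lexx.
rewrite /powR (negbTE u_neq0) ler_expR ler_wpM2l // ltW // ln_sublinear //.
by rewrite lt_neqAle eq_sym u_neq0.
Qed.

Lemma powR_le_scale_expR (s r th : R) : 0 < r -> 0 < th -> 0 <= s ->
  s `^ r <= (r / th) `^ r * expR (th * s).
Proof.
move=> r_gt0 th_gt0 s_ge0.
have [r_neq0 th_neq0] := (gt_eqF r_gt0, gt_eqF th_gt0).
have s_eq : s = r / th * (th * s / r) by field; rewrite r_neq0 th_neq0.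
have [r_ge0 th_ge0] := (ltW r_gt0, ltW th_gt0).
rewrite {1}s_eq powRM ?divr_ge0 ?mulr_ge0 //.
apply: ler_wpM2l; first exact: powR_ge0.
rewrite [X in expR X](_ : _ = r * (th * s / r)); last by field; rewrite r_neq0.
by rewrite powR_le_expR ?divr_ge0 ?mulr_ge0.
Qed.

End ExpBounds.

(* second-order expansion of exp (th e) around th N; the first-order term
   th (e - N) is bounded through N e <= D + L^2 / 2 *)
Lemma expR_increment_le (R : realType) (th L N e D : R) :
  0 < th -> 0 < N -> 2 * th * L <= 1 -> `|N - e| <= L ->
  N * e <= D + L ^+ 2 / 2 ->
  expR (th * e) + expR (th * N) * th * N <=
    expR (th * N) * th / N * D +
    expR (th * N) * (1 + th * L ^+ 2 / (2 * N) + 2 * th ^+ 2 * L ^+ 2).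
Proof.
move=> th_gt0 N_gt0 thL_le; rewrite distrC => dist Ne_le.
have E0_gt0 := expR_gt0 (th * N).
have L_ge0 : 0 <= L by apply: le_trans dist.
have step_le : th * (e - N) <= 1 / 2.
  move: dist; rewrite ler_norml => /andP[_ le_L].
  have : th * (e - N) <= th * L by rewrite ler_pM2l.
  lra.
have sqr_step : (th * (e - N)) ^+ 2 <= th ^+ 2 * L ^+ 2.
  rewrite exprMn ler_pM2l ?exprn_gt0 // -real_normK ?num_real //.
  by rewrite lerXn2r // nnegrE.
have exp_le : expR (th * e) <=
    expR (th * N) * (1 + th * (e - N) + 2 * (th ^+ 2 * L ^+ 2)).
  rewrite [th * e](_ : _ = th * N + th * (e - N)); last by ring.
  rewrite expRD ler_pM2l //; apply: le_trans (expR_le_quad step_le) _; lra.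
have e_le : th * (e - N) <= th / N * D + th * L ^+ 2 / (2 * N) - th * N.
  rewrite -(ler_pM2l N_gt0).
  have -> : N * (th / N * D + th * L ^+ 2 / (2 * N) - th * N) =
      th * (D + L ^+ 2 / 2) - th * N ^+ 2 by field; rewrite gt_eqF.
  by have := ler_wpM2l (ltW th_gt0) Ne_le; lra.
have := ler_wpM2l (ltW E0_gt0) e_le; lra.
Qed.

Lemma drift_coef_le (R : realFieldType) (th L a N : R) :
  0 < th -> 0 < a -> 0 < N -> L ^+ 2 / a < N -> 8 * th * L ^+ 2 <= a ->
  th / N * (N ^+ 2 - a * N) +
    (1 + th * L ^+ 2 / (2 * N) + 2 * th ^+ 2 * L ^+ 2) - th * N
  <= 1 - th * a / 4.
Proof.
move=> th_gt0 a_gt0 N_gt0 N_gt thL2_le.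
have -> : th / N * (N ^+ 2 - a * N) = th * N - th * a by field; rewrite gt_eqF.
have L2_le : L ^+ 2 / (2 * N) <= a / 2.
  have L2_lt : L ^+ 2 < N * a by rewrite -ltr_pdivrMr.
  by rewrite ler_pdivrMr ?mulr_gt0 // (_ : a / 2 * (2 * N) = N * a) ?ltW //; field.
have := ler_wpM2l (ltW th_gt0) L2_le.
have := ler_wpM2l (ltW th_gt0) thL2_le.
rewrite !mulrA; lra.
Qed.

Lemma geometric_sum_le (R : realFieldType) (rho : R) (n : nat) :
  0 <= rho < 1 -> \sum_(k < n) rho ^+ k <= (1 - rho)^-1.
Proof.
case/andP=> rho_ge0 rho_lt1; have rho1_gt0 : 0 < 1 - rho by rewrite subr_gt0.
have sum_eq : (1 - rho) * \sum_(k < n) rho ^+ k = 1 - rho ^+ n.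
  by rewrite -opprB mulNr -subrX1 opprB.
by rewrite -(ler_pM2l rho1_gt0) mulfV ?gt_eqF // sum_eq gerBl exprn_ge0.
Qed.

Section ESum.
Variables (R : realType) (T : choiceType).
Local Open Scope ereal_scope.

Lemma esumZl (S : set T) (c : R) (a : T -> \bar R) :
  (0 <= c)%R -> (forall i, 0 <= a i) ->
  \esum_(i in S) (c%:E * a i) = c%:E * \esum_(i in S) a i.
Proof.
move=> c_ge0 a_ge0; rewrite /esum -ereal_supZl //; last first.
  by apply/set0P; exists 0, set0; [exact: fsets_set0|rewrite fsbig_set0].
rewrite image_comp; congr ereal_sup; apply: eq_imagel => A _ /=.
by rewrite ge0_mule_fsumr.
Qed.

End ESum.

Lemma esum_affine_le (R : realType) (T : choiceType) (p u v : T -> R)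
    (al be ga W : R) :
  (forall i, 0 <= p i) -> (\esum_(i in [set: T]) (p i)%:E = 1)%E ->
  (forall i, 0 <= u i) -> (forall i, 0 <= v i) ->
  0 <= al -> 0 <= be -> 0 <= ga ->
  (forall i, u i + al <= be * v i + ga) ->
  (\esum_(i in [set: T]) (p i * v i)%:E <= W%:E)%E ->
  (\esum_(i in [set: T]) (p i * u i)%:E <= (be * W + ga - al)%:E)%E.
Proof.
move=> p_ge0 p_sum1 u_ge0 v_ge0 al_ge0 be_ge0 ga_ge0 uv_le v_sum.
have weighted i : ((p i * u i)%:E + al%:E * (p i)%:E
    <= be%:E * (p i * v i)%:E + ga%:E * (p i)%:E)%E.
  rewrite -!EFinM -!EFinD lee_fin.
  by have := ler_wpM2l (p_ge0 i) (uv_le i); nra.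
have := le_esum (fun i (_ : [set: T] i) => weighted i).
rewrite !esumD => [|i _|i _|i _|i _]; try by rewrite -?EFinM lee_fin ?mulr_ge0.
rewrite !esumZl => [||||||] //; try by move=> i; rewrite lee_fin ?mulr_ge0.
rewrite p_sum1 !mule1 => sum_le.
rewrite EFinB leeBrDr //; apply: le_trans sum_le _.
by rewrite EFinD EFinM leeD2r // lee_wpmul2l // lee_fin.
Qed.

Section LyapunovIteration.
Variables (R : realType) (d : nat) (Pc : choiceType).
Variables (f : 'rV[R]_d -> Pc -> 'rV[R]_d) (P : 'rV[R]_d -> Pc -> Pc -> R).
Variables (S : set 'rV[R]_d) (V : 'rV[R]_d -> R) (rho K : R).
Hypothesis f_stable : forall x i, S x -> S (f x i).
Hypothesis P_ge0 : forall x y y', 0 <= P x y y'.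
Hypothesis P_sum1 : forall x y, (\esum_(y' in [set: Pc]) (P x y y')%:E = 1)%E.
Hypothesis V_ge0 : forall x, 0 <= V x.
Hypothesis rho_ge0 : 0 <= rho.
Hypothesis K_ge0 : 0 <= K.
Hypothesis V_drift : forall x y, S x ->
  (\esum_(y' in [set: Pc]) (P x y y' * V (f x y'))%:E <= (rho * V x + K)%:E)%E.

Lemma chain_exp_drift_le (g : 'rV[R]_d -> Pc -> \bar R) (c : R) :
  0 <= c -> (forall x y, S x -> (g x y <= (c * V x)%:E)%E) ->
  forall t x y, S x ->
  (chain_exp f P t g x y <=
     (c * (rho ^+ t * V x + K * \sum_(k < t) rho ^+ k))%:E)%E.
Proof.
move=> c_ge0 g_le; elim=> [|t IH] x y Sx /=.
  by rewrite expr0 mul1r big_ord0 mulr0 addr0; exact: g_le.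
set A := c * rho ^+ t; set B := c * (K * \sum_(k < t) rho ^+ k).
have A_ge0 : 0 <= A by rewrite mulr_ge0 ?exprn_ge0.
have B_ge0 : 0 <= B by rewrite !mulr_ge0 ?sumr_ge0 // => k _; rewrite exprn_ge0.
apply: (@le_trans _ _ (\esum_(y' in [set: Pc])
    (A%:E * (P x y y' * V (f x y'))%:E + B%:E * (P x y y')%:E))%E).
  apply: le_esum => i _.
  apply: le_trans (lee_wpmul2l _ (IH (f x i) i (f_stable i Sx))) _.
    by rewrite lee_fin.
  by rewrite -!EFinM -EFinD lee_fin /A /B; lra.
rewrite esumD => [| i _ | i _]; last 2 first.
- by rewrite mule_ge0 // lee_fin mulr_ge0.
- by rewrite mule_ge0 // lee_fin.
rewrite !esumZl // => [|i|i]; last 2 first.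
- by rewrite lee_fin.
- by rewrite lee_fin mulr_ge0.
rewrite P_sum1 mule1.
apply: le_trans (leeD2r _ (lee_wpmul2l _ (V_drift y Sx))) _; first by rewrite lee_fin.
by rewrite -EFinM -EFinD lee_fin /A /B big_ord_recr /= exprS; lra.
Qed.

Lemma chain_exp_le_Lyapunov (g : 'rV[R]_d -> Pc -> \bar R) (c : R) :
  rho < 1 -> 0 <= c -> (forall x y, S x -> (g x y <= (c * V x)%:E)%E) ->
  forall t x y, S x ->
  (chain_exp f P t g x y <= (c * (V x + K / (1 - rho)))%:E)%E.
Proof.
move=> rho_lt1 c_ge0 g_le t x y Sx.
apply: le_trans (chain_exp_drift_le c_ge0 g_le t y Sx) _.
rewrite lee_fin; apply: ler_wpM2l => //; apply: lerD.
  by apply: ler_piMl => //; rewrite exprn_ile1 // ltW.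
by apply: ler_wpM2l => //; rewrite geometric_sum_le // rho_ge0 rho_lt1.
Qed.

End LyapunovIteration.

Section ExponentialDrift.
Variables (R : realType) (d : nat) (Pc : choiceType).
Variables (f : 'rV[R]_d -> Pc -> 'rV[R]_d) (P : 'rV[R]_d -> Pc -> Pc -> R).
Variables (L a th M : R) (C : set 'rV[R]_d).
Hypothesis f_nonneg : forall x i, nonneg_vec x -> nonneg_vec (f x i).
Hypothesis P_ge0 : forall x y y', 0 <= P x y y'.
Hypothesis P_sum1 : forall x y, (\esum_(y' in [set: Pc]) (P x y y')%:E = 1)%E.
Hypothesis f_jump : forall x i, nonneg_vec x -> enorm (x - f x i) <= L.
Hypothesis C_bounded : forall x, C x -> enorm x <= M.
Hypothesis a_gt0 : 0 < a.
Hypothesis drift : forall x y, nonneg_vec x -> ~ C x ->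
  forall j : 'I_d,
    (\esum_(y' in [set: Pc]) (P x y y' * f x y' ord0 j)%:E
       <= (x ord0 j - a * (x ord0 j / enorm x))%:E)%E.
Hypothesis th_gt0 : 0 < th.
Hypothesis thL_le : 2 * th * L <= 1.
Hypothesis thL2_le : 8 * th * L ^+ 2 <= a.
Hypothesis tha_le : th * a <= 4.

Lemma esum_vdot_drift x y : nonneg_vec x -> ~ C x ->
  (\esum_(i in [set: Pc]) (P x y i * vdot x (f x i))%:E
     <= (enorm x ^+ 2 - a * enorm x)%:E)%E.
Proof.
move=> x_ge0 xNC.
have term_ge0 i j : (0 <= (x ord0 j)%:E * (P x y i * f x i ord0 j)%:E)%E.
  by rewrite -EFinM lee_fin !mulr_ge0 // f_nonneg.
rewrite (eq_esum (b := fun i =>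
    \sum_(j < d) ((x ord0 j)%:E * (P x y i * f x i ord0 j)%:E)%E)); last first.
  move=> i _; rewrite /vdot mulr_sumr sumEFin; congr EFin.
  by apply: eq_bigr => j _; ring.
rewrite esum_sum; last by move=> i j _ _; exact: term_ge0.
apply: (@le_trans _ _
    (\sum_(j < d) (x ord0 j * (x ord0 j - a * (x ord0 j / enorm x)))%:E)%E).
  apply: lee_sum => j _; rewrite esumZl // => [|i]; last first.
    by rewrite lee_fin mulr_ge0 // f_nonneg.
  by rewrite EFinM lee_wpmul2l ?lee_fin // drift.
rewrite sumEFin lee_fin.
have -> : \sum_(j < d) x ord0 j * (x ord0 j - a * (x ord0 j / enorm x)) =
    enorm x ^+ 2 - a / enorm x * enorm x ^+ 2.
  by rewrite enorm_sqr mulr_sumr -sumrB; apply: eq_bigr => j _; ring.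
have [->|N_neq0] := eqVneq (enorm x) 0; first by rewrite invr0 !mulr0 mul0r.
by rewrite (_ : a / enorm x * enorm x ^+ 2 = a * enorm x) //; field.
Qed.

Lemma enorm_jump_dist x i : nonneg_vec x -> `|enorm x - enorm (f x i)| <= L.
Proof. by move=> x_ge0; apply: le_trans (enorm_dist _ _) (f_jump i x_ge0). Qed.

Lemma enorm_mul_jump_le_vdot x i : nonneg_vec x ->
  enorm x * enorm (f x i) <= vdot x (f x i) + L ^+ 2 / 2.
Proof.
move=> x_ge0; apply: le_trans (enorm_mul_le_vdot x (f x i)) _.
have L_ge0 : 0 <= L by apply: le_trans (f_jump i x_ge0); exact: enorm_ge0.
by rewrite lerD2l ler_pM2r // lerXn2r ?nnegrE ?enorm_ge0 // f_jump.
Qed.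

Lemma expR_drift_far x y : nonneg_vec x -> ~ C x -> L ^+ 2 / a < enorm x ->
  (\esum_(i in [set: Pc]) (P x y i * expR (th * enorm (f x i)))%:E
     <= ((1 - th * a / 4) * expR (th * enorm x))%:E)%E.
Proof.
move=> x_ge0 xNC N_gt.
have N_gt0 : 0 < enorm x.
  by apply: le_lt_trans N_gt; rewrite divr_ge0 ?sqr_ge0 // ltW.
have E0_ge0 := expR_ge0 (th * enorm x).
have [th_ge0 N_ge0] := (ltW th_gt0, ltW N_gt0).
have increment i := expR_increment_le th_gt0 N_gt0 thL_le
  (enorm_jump_dist i x_ge0) (enorm_mul_jump_le_vdot i x_ge0).
apply: le_trans (esum_affine_le (P_ge0 x y) (P_sum1 x y)
  (fun i => expR_ge0 (th * enorm (f x i)))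
  (fun i => vdot_nonneg_ge0 x_ge0 (f_nonneg i x_ge0)) _ _ _ increment
  (esum_vdot_drift y x_ge0 xNC)) _.
- by rewrite !mulr_ge0.
- by rewrite divr_ge0 ?mulr_ge0.
- apply: mulr_ge0 => //.
  have := divr_ge0 (mulr_ge0 th_ge0 (sqr_ge0 L)) (mulr_ge0 (ler0n _ 2) N_ge0).
  have := mulr_ge0 (mulr_ge0 (ler0n _ 2) (sqr_ge0 th)) (sqr_ge0 L).
  lra.
have coef_le := drift_coef_le th_gt0 a_gt0 N_gt0 N_gt thL2_le.
have := ler_wpM2l E0_ge0 coef_le; rewrite lee_fin => E0_coef_le.
apply: le_trans (le_trans E0_coef_le _).
  lra.
by rewrite mulrC.
Qed.

Lemma expR_drift_near x y (r0 : R) : nonneg_vec x -> enorm x <= r0 ->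
  (\esum_(i in [set: Pc]) (P x y i * expR (th * enorm (f x i)))%:E
     <= (expR (th * (r0 + L)))%:E)%E.
Proof.
move=> x_ge0 N_le.
apply: (@le_trans _ _ (\esum_(i in [set: Pc])
    ((expR (th * (r0 + L)))%:E * (P x y i)%:E))%E).
  apply: le_esum => i _; rewrite -EFinM lee_fin mulrC ler_wpM2r // ler_expR.
  rewrite ler_pM2l //; have := enorm_jump_dist i x_ge0; rewrite ler_norml.
  by case/andP=> + _; lra.
by rewrite esumZl ?expR_ge0 // => [|i]; rewrite ?P_sum1 ?mule1 ?lee_fin.
Qed.

Lemma expR_drift x y : nonneg_vec x ->
  (\esum_(i in [set: Pc]) (P x y i * expR (th * enorm (f x i)))%:E
     <= ((1 - th * a / 4) * expR (th * enorm x) +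
         expR (th * (Num.max M (L ^+ 2 / a) + L)))%:E)%E.
Proof.
move=> x_ge0; have [N_le|N_gt] := lerP (enorm x) (Num.max M (L ^+ 2 / a)).
  apply: le_trans (expR_drift_near y x_ge0 N_le) _; rewrite lee_fin lerDr.
  by rewrite mulr_ge0 ?expR_ge0 //; have := tha_le; lra.
move: N_gt; rewrite gt_max => /andP[M_lt L2a_lt].
have xNC : ~ C x by move=> /C_bounded; rewrite leNgt M_lt.
apply: le_trans (expR_drift_far y x_ge0 xNC L2a_lt) _.
by rewrite lee_fin lerDl expR_ge0.
Qed.

End ExponentialDrift.

Lemma drift_rate_exists (R : realFieldType) (L a : R) : 0 <= L -> 0 < a ->
  exists th : R,
    [/\ 0 < th, 2 * th * L <= 1, 8 * th * L ^+ 2 <= a & th * a <= 4].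
Proof.
move=> L_ge0 a_gt0; set D := 8 * L ^+ 2 + 2 * a * L + a ^+ 2.
have [L2_ge0 a2_ge0] := (sqr_ge0 L, sqr_ge0 a).
have aL_ge0 := mulr_ge0 (ltW a_gt0) L_ge0.
have D_gt0 : 0 < D by rewrite /D; have := exprn_gt0 2 a_gt0; lra.
have frac_le1 X : X <= D -> X / D <= 1 by move=> X_le; rewrite ler_pdivrMr // mul1r.
exists (a / D); split.
- exact: divr_gt0.
- rewrite (_ : _ * L = 2 * a * L / D); last by field; rewrite gt_eqF.
  by apply: frac_le1; rewrite /D; lra.
- rewrite (_ : _ * L ^+ 2 = a * (8 * L ^+ 2 / D)); last by field; rewrite gt_eqF.
  by rewrite ger_pMr // frac_le1 // /D; lra.
- rewrite (_ : _ * a = a ^+ 2 / D); last by field; rewrite gt_eqF.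
  by apply: le_trans (frac_le1 _ _) _; rewrite /D; lra.
Qed.

Theorem proposition8 (R : realType) (d : nat) (Pc : countType)
    (f : 'rV[R]_d -> Pc -> 'rV[R]_d) (P : 'rV[R]_d -> Pc -> Pc -> R)
    (x0 : 'rV[R]_d) (y0 : Pc) (L a : R) (C : set 'rV[R]_d) :
  (forall x i, nonneg_vec x -> nonneg_vec (f x i)) ->
  (forall x y y', 0 <= P x y y' <= 1) ->
  (forall x y, (\esum_(y' in [set: Pc]) (P x y y')%:E = 1)%E) ->
  nonneg_vec x0 ->
  0 < L ->
  (forall x i, nonneg_vec x -> enorm (x - f x i) <= L) ->
  C `<=` [set x | nonneg_vec x] ->
  (exists M : R, forall x, C x -> enorm x <= M) ->
  0 < a ->
  (forall x y, nonneg_vec x -> ~ C x ->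
     forall j : 'I_d,
       (\esum_(y' in [set: Pc]) ((P x y y') * (f x y' ord0 j))%:E
          <= (x ord0 j - a * (x ord0 j / enorm x))%:E)%E) ->
  forall r : R, 0 < r ->
    exists B : R, forall t : nat,
      (chain_exp f P t (fun x _ => (enorm x `^ r)%:E) x0 y0 <= B%:E)%E.
Proof.
move=> f_nonneg P01 P_sum1 x0_ge0 L_gt0 f_jump _ [M C_bounded] a_gt0 drift r r_gt0.
have P_ge0 x y y' : 0 <= P x y y' by case/andP: (P01 x y y').
have [th [th_gt0 thL_le thL2_le tha_le]] := drift_rate_exists (ltW L_gt0) a_gt0.
have V_drift := expR_drift f_nonneg P_ge0 P_sum1 f_jump C_bounded a_gt0 drift
  th_gt0 thL_le thL2_le tha_le.
have rho_ge0 : 0 <= 1 - th * a / 4 by lra.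
have rho_lt1 : 1 - th * a / 4 < 1 by have := mulr_gt0 th_gt0 a_gt0; lra.
have powR_le (x : 'rV[R]_d) (y : Pc) : nonneg_vec x ->
    ((enorm x `^ r)%:E <= ((r / th) `^ r * expR (th * enorm x))%:E)%E.
  by rewrite lee_fin powR_le_scale_expR ?enorm_ge0.
eexists => t; exact: (chain_exp_le_Lyapunov f_nonneg P_ge0 P_sum1
  (fun x => expR_ge0 _) rho_ge0 (expR_ge0 _) V_drift rho_lt1 (powR_ge0 _ _)
  powR_le t y0 x0_ge0).
Qed.
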